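(* Let $C$ be a double category. Then $C$ is globularily generated if and only if $C$ is minimal among internalizations of its decorated horizontalization $H^*C$, i.e. if and only if there is no proper sub-double category $D$ of $C$ with $H^*D=H^*C$.
   Context: A double category $C$ (not assumed strict) consists of a category $C_0$ (objects and vertical morphisms), a category $C_1$ (objects: horizontal morphisms; morphisms: 2-morphisms, composed vertically), source/target functors $s,t:C_1\to C_0$, horizontal identity functor $i:C_0\to C_1$, horizontal composition functor $\ast:C_1\times_{C_0}C_1\to C_1$, and unitor and associator natural isomorphisms with globular components satisfying the usual coherence axioms. A 2-morphism $\Phi$ is globular if $s\Phi,t\Phi$ are identity vertical morphisms. A sub-double category $D$ of $C$: $D_0,D_1$ subcategories of $C_0,C_1$ such that $s,t,i,\ast$, unitors and associator of $C$ restrict to those of $D$. It is complete if it has the same objects, vertical morphisms and horizontal morphisms as $C$. The complete sub-double category generated by a collection $X$ of 2-morphisms is the intersection of all complete sub-double categories containing $X$. $C$ is globularily generated if $C$ equals the complete sub-double category generated by its globular 2-morphisms. The horizontal bicategory $HC$ has objects, horizontal morphisms and globular 2-morphisms of $C$ as 0-,1-,2-cells; the decorated horizontalization is $H^*C=(C_0,HC)$. A double category $E$ is an internalization of a pair $(B^*,B)$ (a category $B^*$ whose object collection equals the 0-cells of the bicategory $B$) if $H^*E=(B^*,B)$. *)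

(* A category presented by its collection of objects and of morphisms.
   Composition is written in diagrammatic order: [comp f g] is "f then g",
   and is only constrained when [cod f = dom g]. *)
Record Cat := {
  ob : Type;
  mor : Type;
  dom : mor -> ob;
  cod : mor -> ob;
  idm : ob -> mor;
  comp : mor -> mor -> mor;
  dom_idm : forall a, dom (idm a) = a;
  cod_idm : forall a, cod (idm a) = a;
  dom_comp : forall f g, cod f = dom g -> dom (comp f g) = dom f;
  cod_comp : forall f g, cod f = dom g -> cod (comp f g) = cod g;
  comp_idl : forall f, comp (idm (dom f)) f = f;
  comp_idr : forall f, comp f (idm (cod f)) = f;
  comp_assoc : forall f g h, cod f = dom g -> cod g = dom h ->
    comp (comp f g) h = comp f (comp g h)
}.

Record Functor (A B : Cat) := {
  fob : ob A -> ob B;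
  fmor : mor A -> mor B;
  f_dom : forall f, dom B (fmor f) = fob (dom A f);
  f_cod : forall f, cod B (fmor f) = fob (cod A f);
  f_idm : forall a, fmor (idm A a) = idm B (fob a);
  f_comp : forall f g, cod A f = dom A g ->
    fmor (comp A f g) = comp B (fmor f) (fmor g)
}.
Arguments fob {A B} _ _.
Arguments fmor {A B} _ _.

(* Objects of C1 are horizontal morphisms,
   morphisms of C1 are 2-morphisms (composed vertically by [comp C1]).
   Horizontal composition [hcO f g] / [hcM x y] is in diagrammatic order,
   defined when [t f = s g]. *)
Record DoubleCat := {
  C0 : Cat;
  C1 : Cat;
  src : Functor C1 C0;
  tgt : Functor C1 C0;
  hid : Functor C0 C1;
  src_hid_ob : forall a, fob src (fob hid a) = a;
  tgt_hid_ob : forall a, fob tgt (fob hid a) = a;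
  src_hid_mor : forall u, fmor src (fmor hid u) = u;
  tgt_hid_mor : forall u, fmor tgt (fmor hid u) = u;
  hcO : ob C1 -> ob C1 -> ob C1;
  hcM : mor C1 -> mor C1 -> mor C1;
  src_hcO : forall f g, fob tgt f = fob src g -> fob src (hcO f g) = fob src f;
  tgt_hcO : forall f g, fob tgt f = fob src g -> fob tgt (hcO f g) = fob tgt g;
  src_hcM : forall x y, fmor tgt x = fmor src y -> fmor src (hcM x y) = fmor src x;
  tgt_hcM : forall x y, fmor tgt x = fmor src y -> fmor tgt (hcM x y) = fmor tgt y;
  dom_hcM : forall x y, fmor tgt x = fmor src y ->
    dom C1 (hcM x y) = hcO (dom C1 x) (dom C1 y);
  cod_hcM : forall x y, fmor tgt x = fmor src y ->
    cod C1 (hcM x y) = hcO (cod C1 x) (cod C1 y);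
  hcM_idm : forall f g, fob tgt f = fob src g ->
    hcM (idm C1 f) (idm C1 g) = idm C1 (hcO f g);
  hcM_comp : forall x x' y y', fmor tgt x = fmor src y ->
    fmor tgt x' = fmor src y' -> cod C1 x = dom C1 x' -> cod C1 y = dom C1 y' ->
    hcM (comp C1 x x') (comp C1 y y') = comp C1 (hcM x y) (hcM x' y');
  lam : ob C1 -> mor C1;
  lamI : ob C1 -> mor C1;
  rho : ob C1 -> mor C1;
  rhoI : ob C1 -> mor C1;
  alpha : ob C1 -> ob C1 -> ob C1 -> mor C1;
  alphaI : ob C1 -> ob C1 -> ob C1 -> mor C1;
  dom_lam : forall f, dom C1 (lam f) = hcO (fob hid (fob src f)) f;
  cod_lam : forall f, cod C1 (lam f) = f;
  dom_rho : forall f, dom C1 (rho f) = hcO f (fob hid (fob tgt f));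
  cod_rho : forall f, cod C1 (rho f) = f;
  dom_alpha : forall f g h, fob tgt f = fob src g -> fob tgt g = fob src h ->
    dom C1 (alpha f g h) = hcO (hcO f g) h;
  cod_alpha : forall f g h, fob tgt f = fob src g -> fob tgt g = fob src h ->
    cod C1 (alpha f g h) = hcO f (hcO g h);
  lam_glob : forall f, fmor src (lam f) = idm C0 (fob src f) /\
                       fmor tgt (lam f) = idm C0 (fob tgt f);
  rho_glob : forall f, fmor src (rho f) = idm C0 (fob src f) /\
                       fmor tgt (rho f) = idm C0 (fob tgt f);
  alpha_glob : forall f g h, fob tgt f = fob src g -> fob tgt g = fob src h ->
    fmor src (alpha f g h) = idm C0 (fob src f) /\
    fmor tgt (alpha f g h) = idm C0 (fob tgt h);
  lam_iso : forall f, comp C1 (lam f) (lamI f) = idm C1 (hcO (fob hid (fob src f)) f)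
                   /\ comp C1 (lamI f) (lam f) = idm C1 f;
  rho_iso : forall f, comp C1 (rho f) (rhoI f) = idm C1 (hcO f (fob hid (fob tgt f)))
                   /\ comp C1 (rhoI f) (rho f) = idm C1 f;
  alpha_iso : forall f g h, fob tgt f = fob src g -> fob tgt g = fob src h ->
    comp C1 (alpha f g h) (alphaI f g h) = idm C1 (hcO (hcO f g) h) /\
    comp C1 (alphaI f g h) (alpha f g h) = idm C1 (hcO f (hcO g h));
  lam_nat : forall x, comp C1 (hcM (fmor hid (fmor src x)) x) (lam (cod C1 x))
                      = comp C1 (lam (dom C1 x)) x;
  rho_nat : forall x, comp C1 (hcM x (fmor hid (fmor tgt x))) (rho (cod C1 x))
                      = comp C1 (rho (dom C1 x)) x;
  alpha_nat : forall x y z, fmor tgt x = fmor src y -> fmor tgt y = fmor src z ->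
    comp C1 (hcM (hcM x y) z) (alpha (cod C1 x) (cod C1 y) (cod C1 z))
    = comp C1 (alpha (dom C1 x) (dom C1 y) (dom C1 z)) (hcM x (hcM y z));
  triangle : forall f g, fob tgt f = fob src g ->
    comp C1 (alpha f (fob hid (fob tgt f)) g) (hcM (idm C1 f) (lam g))
    = hcM (rho f) (idm C1 g);
  pentagon : forall f g h k, fob tgt f = fob src g -> fob tgt g = fob src h ->
    fob tgt h = fob src k ->
    comp C1 (alpha (hcO f g) h k) (alpha f g (hcO h k))
    = comp C1 (comp C1 (hcM (alpha f g h) (idm C1 k)) (alpha f (hcO g h) k))
              (hcM (idm C1 f) (alpha g h k))
}.

Section Sub.
Variable C : DoubleCat.

Definition globular (x : mor (C1 C)) : Prop :=
  fmor (src C) x = idm (C0 C) (fob (src C) (dom (C1 C) x)) /\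
  fmor (tgt C) x = idm (C0 C) (fob (tgt C) (dom (C1 C) x)).

(* A sub-double category D of C, given by predicates selecting its objects
   (PO), vertical morphisms (PV), horizontal morphisms (PH) and
   2-morphisms (PS). *)
Definition is_sub_double (PO : ob (C0 C) -> Prop) (PV : mor (C0 C) -> Prop)
    (PH : ob (C1 C) -> Prop) (PS : mor (C1 C) -> Prop) : Prop :=
  (forall u, PV u -> PO (dom (C0 C) u) /\ PO (cod (C0 C) u)) /\
  (forall a, PO a -> PV (idm (C0 C) a)) /\
  (forall u v, PV u -> PV v -> cod (C0 C) u = dom (C0 C) v -> PV (comp (C0 C) u v)) /\
  (forall x, PS x -> PH (dom (C1 C) x) /\ PH (cod (C1 C) x)) /\
  (forall f, PH f -> PS (idm (C1 C) f)) /\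
  (forall x y, PS x -> PS y -> cod (C1 C) x = dom (C1 C) y -> PS (comp (C1 C) x y)) /\
  (forall f, PH f -> PO (fob (src C) f) /\ PO (fob (tgt C) f)) /\
  (forall x, PS x -> PV (fmor (src C) x) /\ PV (fmor (tgt C) x)) /\
  (forall a, PO a -> PH (fob (hid C) a)) /\
  (forall u, PV u -> PS (fmor (hid C) u)) /\
  (forall f g, PH f -> PH g -> fob (tgt C) f = fob (src C) g -> PH (hcO C f g)) /\
  (forall x y, PS x -> PS y -> fmor (tgt C) x = fmor (src C) y -> PS (hcM C x y)) /\
  (forall f, PH f -> PS (lam C f) /\ PS (lamI C f) /\ PS (rho C f) /\ PS (rhoI C f)) /\
  (forall f g h, PH f -> PH g -> PH h ->
     fob (tgt C) f = fob (src C) g -> fob (tgt C) g = fob (src C) h ->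
     PS (alpha C f g h) /\ PS (alphaI C f g h)).

Definition is_complete (PO : ob (C0 C) -> Prop) (PV : mor (C0 C) -> Prop)
    (PH : ob (C1 C) -> Prop) : Prop :=
  (forall a, PO a) /\ (forall u, PV u) /\ (forall f, PH f).

Definition in_generated (X : mor (C1 C) -> Prop) (x : mor (C1 C)) : Prop :=
  forall PO PV PH PS, is_sub_double PO PV PH PS -> is_complete PO PV PH ->
    (forall y, X y -> PS y) -> PS x.

(* C is globularily generated: C equals the complete sub-double category
   generated by its globular 2-morphisms (objects, vertical and horizontal
   morphisms agree automatically by completeness). *)
Definition globularily_generated : Prop :=
  forall x, in_generated globular x.

(* H^*D = H^*C: D has the same objects, vertical morphisms, horizontal
   morphisms and globular 2-morphisms as C (the bicategory operations of
   HD are the restrictions of those of HC since D is a sub-double category). *)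
Definition same_decorated_horizontalization (PO : ob (C0 C) -> Prop)
    (PV : mor (C0 C) -> Prop) (PH : ob (C1 C) -> Prop)
    (PS : mor (C1 C) -> Prop) : Prop :=
  is_complete PO PV PH /\ (forall x, globular x -> PS x).

Definition is_whole (PO : ob (C0 C) -> Prop) (PV : mor (C0 C) -> Prop)
    (PH : ob (C1 C) -> Prop) (PS : mor (C1 C) -> Prop) : Prop :=
  (forall a, PO a) /\ (forall u, PV u) /\ (forall f, PH f) /\ (forall x, PS x).

Definition minimal_internalization : Prop :=
  forall PO PV PH PS, is_sub_double PO PV PH PS ->
    same_decorated_horizontalization PO PV PH PS -> is_whole PO PV PH PS.

End Sub.


Section GlobularilyGeneratedMinimal.
Variable C : DoubleCat.

Lemma minimal_internalization_of_globularily_generated :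
  globularily_generated C -> minimal_internalization C.
Proof.
  intros Hgen PO PV PH PS Hsub [Hcomplete Hglob].
  destruct Hcomplete as (HO & HV & HH).
  repeat split; try assumption.
  intro x. exact (Hgen x PO PV PH PS Hsub (conj HO (conj HV HH)) Hglob).
Qed.

Lemma globularily_generated_of_minimal_internalization :
  minimal_internalization C -> globularily_generated C.
Proof.
  intros Hmin x PO PV PH PS Hsub Hcomplete Hglob.
  destruct (Hmin PO PV PH PS Hsub (conj Hcomplete Hglob)) as (_ & _ & _ & HS).
  apply HS.
Qed.

End GlobularilyGeneratedMinimal.

Theorem corollary3p3 (C : DoubleCat) :
  globularily_generated C <-> minimal_internalization C.
Proof.
  split.
  - apply minimal_internalization_of_globularily_generated.
  - apply globularily_generated_of_minimal_internalization.
Qed.
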